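(* Let $n\geq 3$ be odd. Then the GFB trees $T_n^{gfb}$ and $T_{n-1}^{gfb}$ have a common maximal pending subtree, and $T_n^{gfb}$ and $T_{n+1}^{gfb}$ have a common maximal pending subtree.
   Context: A rooted binary tree with $n\geq 2$ leaves is a rooted tree whose root has degree 2 and all other internal nodes have degree 3; for $n=1$ it is a single node. Trees are considered up to isomorphism. The maximal pending subtrees of a tree with at least 2 leaves are the two subtrees rooted at the children of the root. The GFB tree $T_n^{gfb}$ is the output of: start with $n$ single-node trees; while more than one tree remains, remove a tree $u$ of minimal size (number of leaves), then remove a tree $v$ of minimal size among the remaining ones, and insert the tree with a new root whose children are the roots of $u$ and $v$; output the remaining tree. *)

From Stdlib Require Import List Permutation Arith Relations.
Import ListNotations.

Inductive tree : Type :=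
| Leaf : tree
| Node : tree -> tree -> tree.

Fixpoint size (t : tree) : nat :=
  match t with
  | Leaf => 1
  | Node a b => size a + size b
  end.

Inductive iso : tree -> tree -> Prop :=
| iso_leaf : iso Leaf Leaf
| iso_node : forall a b a' b', iso a a' -> iso b b' -> iso (Node a b) (Node a' b')
| iso_swap : forall a b a' b', iso a b' -> iso b a' -> iso (Node a b) (Node a' b').

Definition max_pending (s t : tree) : Prop :=
  match t with
  | Leaf => False
  | Node a b => s = a \/ s = b
  end.

Definition common_max_pending (T1 T2 : tree) : Prop :=
  exists s1 s2, max_pending s1 T1 /\ max_pending s2 T2 /\ iso s1 s2.

(* One step of the GFB process on a multiset (list up to permutation) of trees:
   remove u of minimal size, then v of minimal size among the remaining,
   and insert the tree with a new root whose children are u and v. *)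
Inductive gfb_step : list tree -> list tree -> Prop :=
| gfb_step_intro : forall l u v rest,
    Permutation l (u :: v :: rest) ->
    (forall w, In w (v :: rest) -> size u <= size w) ->
    (forall w, In w rest -> size v <= size w) ->
    gfb_step l (Node u v :: rest).

Definition gfb (n : nat) (T : tree) : Prop :=
  clos_refl_trans (list tree) gfb_step (repeat Leaf n) [T].

(* During the GFB process the forest always consists of copies of the complete
   tree of height j, copies of the complete tree of height j+1, and at most one
   further tree with strictly between 2^j and 2^(j+1) leaves; merging the two
   smallest trees preserves this shape, possibly with j increased by one.
   Inspecting the last merge shows that the complete tree of height m is a
   maximal pending subtree of T_n whenever n <= 3 * 2^m <= 2n.  The windows of
   two consecutive k, k+1 >= 2 always share such an m. *)

From Stdlib Require Import Arith.
From Stdlib Require Import List Permutation Relations Lia.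
Import ListNotations.

Lemma clos_rt_invariant {A : Type} (R : relation A) (P : A -> Prop) :
  (forall x y, P x -> R x y -> P y) ->
  forall x y, clos_refl_trans A R x y -> P x -> P y.
Proof. intros HR x y Hxy; induction Hxy; eauto. Qed.

Lemma iso_refl t : iso t t.
Proof. induction t; constructor; assumption. Qed.

Lemma common_max_pending_intro s T T' :
  max_pending s T -> max_pending s T' -> common_max_pending T T'.
Proof. intros H H'. exists s, s. split; [|split]; auto using iso_refl. Qed.

Definition total_size (l : list tree) : nat := list_sum (map size l).

Lemma total_size_perm l l' : Permutation l l' -> total_size l = total_size l'.
Proof. intro H. apply Permutation_list_sum, Permutation_map, H. Qed.

Lemma total_size_leaves n : total_size (repeat Leaf n) = n.
Proof. unfold total_size; induction n as [|n IH]; simpl; lia. Qed.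

Lemma gfb_step_total_size l l' : gfb_step l l' -> total_size l' = total_size l.
Proof.
  intros [l0 u v rest Hp _ _]. rewrite (total_size_perm _ _ Hp).
  unfold total_size; simpl; lia.
Qed.

Lemma gfb_size n T : gfb n T -> size T = n.
Proof.
  intro HT.
  apply (clos_rt_invariant _ (fun l => total_size l = n)) in HT.
  - unfold total_size in HT; simpl in HT; lia.
  - intros l l' Hl Hstep. rewrite (gfb_step_total_size _ _ Hstep); exact Hl.
  - apply total_size_leaves.
Qed.

Definition least (x : tree) (l : list tree) : Prop :=
  forall w, In w l -> w = x \/ size x < size w.

Lemma perm_cons_least u rest x X :
  Permutation (u :: rest) (x :: X) ->
  (forall w, In w rest -> size u <= size w) -> least x X ->
  u = x /\ Permutation rest X.
Proof.
  intros Hp Hu Hx.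
  enough (u = x) as <- by (split; [reflexivity|exact (Permutation_cons_inv Hp)]).
  destruct (in_inv (Permutation_in _ Hp (in_eq u rest))) as [->|HuX]; [reflexivity|].
  destruct (Hx u HuX) as [->|Hlt]; [reflexivity|].
  destruct (in_inv (Permutation_in _ (Permutation_sym Hp) (in_eq x X))) as [->|Hxr];
    [reflexivity|].
  specialize (Hu _ Hxr). lia.
Qed.

Lemma gfb_step_least l l' x y X :
  Permutation l (x :: y :: X) -> least x (y :: X) -> least y X ->
  gfb_step l l' -> Permutation l' (Node x y :: X).
Proof.
  intros Hl Hx Hy Hstep. destruct Hstep as [l u v rest Hp Hu Hv].
  destruct (perm_cons_least u (v :: rest) x (y :: X)) as [-> Hrest];
    [exact (perm_trans (Permutation_sym Hp) Hl)|exact Hu|exact Hx|].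
  destruct (perm_cons_least v rest y X Hrest Hv Hy) as [-> HX].
  exact (perm_skip _ HX).
Qed.

Fixpoint complete (j : nat) : tree :=
  match j with 0 => Leaf | S j => Node (complete j) (complete j) end.

Lemma size_complete j : size (complete j) = 2 ^ j.
Proof. induction j as [|j IH]; simpl; rewrite ?IH; lia. Qed.

Definition layer (j a b : nat) (ro : list tree) : list tree :=
  repeat (complete j) a ++ ro ++ repeat (complete (S j)) b.

Definition remainder (j : nat) (ro : list tree) : Prop :=
  ro = [] \/ exists R, ro = [R] /\ 2 ^ j < size R < 2 ^ S j.

Definition layered (l : list tree) : Prop :=
  exists j a b ro, Permutation l (layer j a b ro) /\ remainder j ro.

Lemma least_repeat x y b : y = x \/ size x < size y -> least x (repeat y b).
Proof. intros Hy w Hw. apply repeat_spec in Hw. subst w. exact Hy. Qed.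

Lemma least_layer j a b ro : remainder j ro -> least (complete j) (layer j a b ro).
Proof.
  intros Hro w Hw. unfold layer in Hw. rewrite !in_app_iff in Hw.
  destruct Hw as [Hw|[Hw|Hw]]; try (apply repeat_spec in Hw; subst w).
  - left; reflexivity.
  - destruct Hro as [->|(R & -> & HR)]; [destruct Hw|].
    destruct Hw as [<-|[]]. right. rewrite size_complete. lia.
  - right. rewrite !size_complete, Nat.pow_succ_r'. pose proof (Nat.pow_nonzero 2 j). lia.
Qed.

Lemma layered_normal l : layered l -> 1 <= length l ->
  exists j a b ro, Permutation l (layer j a b ro) /\ remainder j ro /\ (1 <= a \/ ro <> []).
Proof.
  intros (j & a & b & ro & Hl & Hro) Hlen.
  destruct a as [|a]; [|exists j, (S a), b, ro; repeat split; auto; lia].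
  destruct Hro as [->|(R & -> & HR)].
  - exists (S j), b, 0, []. unfold layer in *; simpl in *. rewrite app_nil_r.
    apply Permutation_length in Hl as Hb. rewrite repeat_length in Hb.
    repeat split; auto; [left; reflexivity|lia].
  - exists j, 0, b, [R]. repeat split; auto; [right; eauto|right; discriminate].
Qed.

Lemma pow2_window n m j :
  2 * 2 ^ j <= n <= 4 * 2 ^ j -> n <= 3 * 2 ^ m <= 2 * n ->
  (m = j /\ n <= 3 * 2 ^ j) \/ (m = S j /\ 3 * 2 ^ j <= n).
Proof.
  intros Hn Hm. pose proof (Nat.pow_nonzero 2 m ltac:(lia)).
  destruct (lt_eq_lt_dec m j) as [[Hlt| ->]|Hgt]; [exfalso| |].
  - apply Nat.pow_le_mono_r with (a := 2) in Hlt; [|lia]. simpl in Hlt. lia.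
  - left; lia.
  - destruct (Nat.eq_dec m (S j)) as [->|Hne]; [simpl in Hm; right; lia|exfalso].
    assert (Hle : S (S j) <= m) by lia.
    apply Nat.pow_le_mono_r with (a := 2) in Hle; [|lia]. simpl in Hle. lia.
Qed.

Definition complete_pending (T : tree) : Prop :=
  forall m, size T <= 3 * 2 ^ m <= 2 * size T -> max_pending (complete m) T.

Lemma complete_pending_window x y j :
  2 * 2 ^ j <= size x + size y <= 4 * 2 ^ j ->
  (size x + size y <= 3 * 2 ^ j -> complete j = x \/ complete j = y) ->
  (3 * 2 ^ j <= size x + size y -> complete (S j) = x \/ complete (S j) = y) ->
  complete_pending (Node x y).
Proof.
  intros Hn Hlow Hhigh m Hm.
  destruct (pow2_window _ m j Hn Hm) as [[-> Hle]|[-> Hle]]; simpl; auto.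
Qed.

Definition greedy_merge (x y : tree) (X : list tree) : Prop :=
  least x (y :: X) /\ least y X /\ layered (Node x y :: X) /\
  (X = [] -> complete_pending (Node x y)).

Lemma layered_new_remainder j b N : 2 ^ S j < size N < 2 ^ S (S j) ->
  layered (N :: repeat (complete (S j)) b).
Proof.
  intros HN. exists (S j), b, 0, [N]. split.
  - unfold layer. rewrite app_nil_r. apply Permutation_cons_append.
  - right. exists N. split; [reflexivity|exact HN].
Qed.

Lemma greedy_merge_remainder_succ j b R : 2 ^ j < size R < 2 ^ S j ->
  greedy_merge R (complete (S j)) (repeat (complete (S j)) b).
Proof.
  intros HR. rewrite Nat.pow_succ_r' in HR.
  pose proof (size_complete j) as Hj. pose proof (size_complete (S j)) as HSj.
  rewrite Nat.pow_succ_r' in HSj.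
  split; [|split; [|split]].
  - apply (least_repeat _ _ (S b)). right. lia.
  - apply least_repeat. left; reflexivity.
  - apply layered_new_remainder. rewrite !Nat.pow_succ_r'. simpl size. lia.
  - intros Hb. destruct b; [|discriminate].
    apply complete_pending_window with j; rewrite HSj; [lia|lia|auto].
Qed.

Lemma greedy_merge_complete_succ j b :
  greedy_merge (complete j) (complete (S j)) (repeat (complete (S j)) b).
Proof.
  pose proof (size_complete j) as Hj. pose proof (size_complete (S j)) as HSj.
  rewrite Nat.pow_succ_r' in HSj. pose proof (Nat.pow_nonzero 2 j ltac:(lia)).
  split; [|split; [|split]].
  - exact (least_layer j 0 (S b) [] (or_introl eq_refl)).
  - apply least_repeat. left; reflexivity.
  - apply layered_new_remainder. rewrite !Nat.pow_succ_r'. simpl size. lia.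
  - intros Hb. destruct b; [|discriminate].
    apply complete_pending_window with j; [lia|auto|auto].
Qed.

Lemma greedy_merge_complete_remainder j b R : 2 ^ j < size R < 2 ^ S j ->
  greedy_merge (complete j) R (repeat (complete (S j)) b).
Proof.
  intros HR. pose proof (size_complete j) as Hj. pose proof (size_complete (S j)) as HSj.
  split; [|split; [|split]].
  - exact (least_layer j 0 b [R] (or_intror (ex_intro _ R (conj eq_refl HR)))).
  - apply least_repeat. right. lia.
  - apply layered_new_remainder. rewrite !Nat.pow_succ_r' in *. simpl size. lia.
  - intros Hb. destruct b; [|discriminate]. rewrite Nat.pow_succ_r' in HR.
    apply complete_pending_window with j; [lia|auto|lia].
Qed.

Lemma greedy_merge_complete_complete j a b ro : remainder j ro ->
  greedy_merge (complete j) (complete j) (layer j a b ro).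
Proof.
  intros Hro. pose proof (size_complete j) as Hj.
  split; [|split; [|split]].
  - exact (least_layer j (S a) b ro Hro).
  - exact (least_layer j a b ro Hro).
  - exists j, a, (S b), ro. split; [|exact Hro].
    unfold layer. rewrite !app_assoc. apply Permutation_middle.
  - intros Hlayer. unfold layer in Hlayer.
    apply app_eq_nil in Hlayer as [Ha Hlayer]. apply app_eq_nil in Hlayer as [-> Hb].
    destruct a; [|discriminate]. destruct b; [|discriminate].
    pose proof (Nat.pow_nonzero 2 j ltac:(lia)).
    apply complete_pending_window with j; rewrite Hj; [lia|auto|lia].
Qed.

Lemma layered_next l : layered l -> 2 <= length l ->
  exists x y X, Permutation l (x :: y :: X) /\ greedy_merge x y X.
Proof.
  intros Hs Hlen.
  destruct (layered_normal l Hs) as (j & a & b & ro & Hl & Hro & Ha); [lia|].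
  pose proof (Permutation_length Hl) as Hlen'.
  unfold layer in Hlen'; rewrite !length_app, !repeat_length in Hlen'.
  destruct a as [|[|a]].
  - destruct Hro as [->|(R & -> & HR)]; [destruct Ha as [Ha|Ha]; [lia|congruence]|].
    destruct b as [|b]; [simpl in Hlen'; lia|].
    exists R, (complete (S j)), (repeat (complete (S j)) b).
    split; [exact Hl|exact (greedy_merge_remainder_succ j b R HR)].
  - destruct Hro as [->|(R & -> & HR)].
    + destruct b as [|b]; [simpl in Hlen'; lia|].
      exists (complete j), (complete (S j)), (repeat (complete (S j)) b).
      split; [exact Hl|exact (greedy_merge_complete_succ j b)].
    + exists (complete j), R, (repeat (complete (S j)) b).
      split; [exact Hl|exact (greedy_merge_complete_remainder j b R HR)].
  - exists (complete j), (complete j), (layer j a b ro).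
    split; [exact Hl|exact (greedy_merge_complete_complete j a b ro Hro)].
Qed.

Lemma layered_step l l' : layered l -> gfb_step l l' ->
  layered l' /\ (forall T, l' = [T] -> complete_pending T).
Proof.
  intros Hs Hstep.
  assert (Hlen : 2 <= length l)
    by (destruct Hstep as [l u v rest Hp _ _]; rewrite (Permutation_length Hp); simpl; lia).
  destruct (layered_next l Hs Hlen) as (x & y & X & Hl & Hx & Hy & Hnext & Hfinal).
  pose proof (gfb_step_least l l' x y X Hl Hx Hy Hstep) as Hl'.
  split.
  - destruct Hnext as (j & a & b & ro & Hp & Hro).
    exists j, a, b, ro. split; [exact (perm_trans Hl' Hp)|exact Hro].
  - intros T ->. apply Permutation_length_1_inv in Hl'.
    injection Hl' as <- HX. exact (Hfinal HX).
Qed.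

Lemma gfb_complete_pending n T : 2 <= n -> gfb n T -> complete_pending T.
Proof.
  intros Hn HT.
  apply (clos_rt_invariant _ (fun l => layered l /\ forall T, l = [T] -> complete_pending T))
    in HT.
  - destruct HT as [_ HT]. exact (HT T eq_refl).
  - intros l l' [Hs _] Hstep. exact (layered_step l l' Hs Hstep).
  - split.
    + exists 0, n, 0, []. split; [|left; reflexivity].
      unfold layer. simpl. rewrite app_nil_r. apply Permutation_refl.
    + intros T' HT'. destruct n as [|[|n]]; [lia|lia|discriminate].
Qed.

Lemma gfb_max_pending_complete n T m :
  2 <= n -> gfb n T -> n <= 3 * 2 ^ m <= 2 * n -> max_pending (complete m) T.
Proof.
  intros Hn HT Hm. apply (gfb_complete_pending n T Hn HT).
  rewrite (gfb_size n T HT). exact Hm.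
Qed.

Lemma pow2_third_consecutive k :
  2 <= k -> exists m, k <= 3 * 2 ^ m <= 2 * k /\ S k <= 3 * 2 ^ m <= 2 * S k.
Proof.
  intros Hk. destruct (Nat.log2_spec k) as [Hlo Hhi]; [lia|].
  destruct (Nat.log2 k) as [|q]; [simpl in Hhi; lia|].
  rewrite Nat.pow_succ_r' in Hlo. rewrite !Nat.pow_succ_r' in Hhi.
  destruct (Nat.lt_ge_cases k (3 * 2 ^ q)).
  - exists q. lia.
  - exists (S q). rewrite Nat.pow_succ_r'. lia.
Qed.

Theorem lemma9 (n : nat) (T Tm Tp : tree) :
  3 <= n -> Nat.Odd n ->
  gfb n T -> gfb (n - 1) Tm -> gfb (n + 1) Tp ->
  common_max_pending T Tm /\ common_max_pending T Tp.
Proof.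
  intros Hn _ HT HTm HTp.
  destruct (pow2_third_consecutive (n - 1)) as (m & Hm_pred & Hm_n); [lia|].
  destruct (pow2_third_consecutive n) as (m' & Hm'_n & Hm'_succ); [lia|].
  replace (S (n - 1)) with n in Hm_n by lia. rewrite <- Nat.add_1_r in Hm'_succ.
  split.
  - apply common_max_pending_intro with (complete m).
    + exact (gfb_max_pending_complete n T m ltac:(lia) HT Hm_n).
    + exact (gfb_max_pending_complete (n - 1) Tm m ltac:(lia) HTm Hm_pred).
  - apply common_max_pending_intro with (complete m').
    + exact (gfb_max_pending_complete n T m' ltac:(lia) HT Hm'_n).
    + exact (gfb_max_pending_complete (n + 1) Tp m' ltac:(lia) HTp Hm'_succ).
Qed.
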